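(* Fix a monomial order on $S$. Let $J$ be an ideal of $S$, $\mathcal G_J$ a Gröbner basis of $J$, and $(E_i)_{i\in\Lambda}$ a family of ideals of $S$ each of which is S-nice with respect to $\mathcal G_J$. Then: (a) $\bigcap_{i\in\Lambda}E_i$ is S-nice with respect to $\mathcal G_J$; (b) if moreover $(E_i,E_j)$ is a G-nice pair for all $i,j\in\Lambda$, then $\sum_{i\in\Lambda}E_i$ is S-nice with respect to $\mathcal G_J$.
   Context: $K$ is a field and $S=K[x_1,\ldots,x_n]$ with a fixed monomial order. For $0\neq f\in S$, $\mathrm{in}(f)$ denotes its leading monomial and $\mathrm{LT}(f)$ its leading term; for an ideal $I$, $\mathrm{in}(I)$ is the ideal generated by the leading monomials of the nonzero elements of $I$. A pair $(J,E)$ of ideals is G-nice if $\mathrm{in}(J+E)=\mathrm{in}(J)+\mathrm{in}(E)$. For nonzero $f,g\in S$ the S-polynomial is $S(f,g)=\frac{\mathrm{lcm}(\mathrm{in}(f),\mathrm{in}(g))}{\mathrm{LT}(f)}f-\frac{\mathrm{lcm}(\mathrm{in}(f),\mathrm{in}(g))}{\mathrm{LT}(g)}g$. Given a Gröbner basis $\mathcal G_J$ of an ideal $J$, an ideal $E$ is called S-nice with respect to $\mathcal G_J$ if $S(f,g)\in E$ for all $f\in\mathcal G_J$ and all nonzero $g\in E$. *)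

From HB Require Import structures.
From mathcomp Require Import all_boot all_order all_algebra.
From mathcomp Require Import mpoly.

Set Implicit Arguments.
Unset Strict Implicit.
Unset Printing Implicit Defensive.

Import GRing.Theory.
Local Open Scope ring_scope.

Section GB.
Variables (K : fieldType) (n : nat).

Local Notation mono := ('X_{1..n}).
Local Notation poly := ({mpoly K[n]}).

Definition monomial_order (le : rel mono) : Prop :=
  [/\ reflexive le, antisymmetric le, transitive le & total le] /\
  (forall m1 m2 m, le m1 m2 -> le (m1 + m)%MM (m2 + m)%MM) /\
  well_founded (fun a b => le a b && (a != b)).

(* in(f): the largest monomial of the support of f w.r.t. le (0 if f = 0). *)
Definition lmono (le : rel mono) (f : poly) : mono :=
  foldr (fun m acc => if le acc m then m else acc) 0%MM (msupp f).

Definition lcoef (le : rel mono) (f : poly) : K := f@_(lmono le f).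

Definition spoly (le : rel mono) (f g : poly) : poly :=
  let l := mlcm (lmono le f) (lmono le g) in
  ((lcoef le f)^-1 *: 'X_[(l - lmono le f)%MM]) * f
  - ((lcoef le g)^-1 *: 'X_[(l - lmono le g)%MM]) * g.

Definition pset := poly -> Prop.

Definition is_ideal (I : pset) : Prop :=
  [/\ I 0, (forall f g, I f -> I g -> I (f + g)) & (forall r f, I f -> I (r * f))].

Definition pset_eq (A B : pset) : Prop := forall f, A f <-> B f.

Definition ideal_gen (A : pset) : pset :=
  fun f => exists s : seq (poly * poly),
    (forall p, p \in s -> A p.2) /\ f = \sum_(p <- s) p.1 * p.2.

Definition initial_ideal (le : rel mono) (I : pset) : pset :=
  ideal_gen (fun m => exists f, [/\ I f, f != 0 & m = 'X_[lmono le f]]).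

Definition ideal_add (I E : pset) : pset := ideal_gen (fun f => I f \/ E f).

Definition ideal_bigsum (L : Type) (E : L -> pset) : pset :=
  ideal_gen (fun f => exists i, E i f).
Definition ideal_bigcap (L : Type) (E : L -> pset) : pset :=
  fun f => forall i, E i f.

Definition G_nice (le : rel mono) (J E : pset) : Prop :=
  pset_eq (initial_ideal le (ideal_add J E))
          (ideal_add (initial_ideal le J) (initial_ideal le E)).

Definition groebner_basis (le : rel mono) (J : pset) (G : seq poly) : Prop :=
  (forall g, g \in G -> J g /\ g != 0) /\
  pset_eq (initial_ideal le J)
          (ideal_gen (fun m => exists2 g, g \in G & m = 'X_[lmono le g])).

Definition S_nice (le : rel mono) (G : seq poly) (E : pset) : Prop :=
  forall f g, f \in G -> E g -> g != 0 -> E (spoly le f g).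

End GB.

(* Part (a) is immediate: S(f,g) lies in every E_i.  Part (b) rests on
     (KEY) if the ideals E_i are pairwise G-nice, every nonzero g in the sum
           of the E_i has in(g) divisible by in(h) for a nonzero h in some E_i.
   Then, for f in G, lcm(in f, in h) divides lcm(in f, in g), and
     S(f,g) = w * (S(f,h) + c * h) - c' * g
   for a monomial w and terms c, c' (lemma [spoly_lm_divisor]); since
   S(f,h) lies in E_i, S(f,g) lies in the sum.

   (KEY) is proved by descent on a bound N for the supports of the terms of
   a representation g = e_1 + ... + e_k with e_j in some E_{i_j}.  If g has a
   nonzero coefficient at N, some e_j has leading monomial N = in(g).
   Otherwise the terms are merged two at a time: G-niceness of (E_a, E_b)
   provides h in E_a or E_b with in(h) dividing the top monomial of e_a + e_b,
   and cancelling the top term by a multiple of h, recursively along the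
   monomial order, rewrites e_a + e_b = e + e_a' + e_b' with e_a', e_b'
   supported strictly below N ([pair_reduce]).  Along the whole list only one
   term e remains at N; it must vanish at N too, so everything lies below
   some N' < N and the descent continues ([sum_lm_divisor]). *)

From HB Require Import structures.
From mathcomp Require Import all_boot all_order all_algebra.
From mathcomp Require Import mpoly.
From mathcomp Require Import ring.

Set Implicit Arguments.
Unset Strict Implicit.
Unset Printing Implicit Defensive.

Import GRing.Theory.
Local Open Scope ring_scope.

Lemma nonzero_summand (T : eqType) (R : nmodType) (l : seq T) (F : T -> R) :
  \sum_(x <- l) F x != 0 -> exists2 x, x \in l & F x != 0.
Proof.
move=> s_neq0; apply/hasP; apply: contraNT s_neq0 => /hasPn l0.
by rewrite big1_seq // => x /andP[_ /l0]; rewrite negbK => /eqP.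
Qed.

Section Ideals.
Variables (K : fieldType) (n : nat).
Local Notation poly := {mpoly K[n]}.

Lemma ideal_gen_ind (A P : pset K n) :
  P 0 -> (forall f g, P f -> P g -> P (f + g)) ->
  (forall r f, P f -> P (r * f)) -> (forall f, A f -> P f) ->
  forall f, ideal_gen A f -> P f.
Proof.
move=> P0 PD PM PA f [s [sA ->]]; elim: s sA => [|[r g] s IH] sA.
  by rewrite big_nil.
rewrite big_cons; apply: PD; first by apply/PM/PA; apply: (sA (r, g)); rewrite mem_head.
by apply: IH => p ps; apply: sA; rewrite inE ps orbT.
Qed.

Lemma ideal_gen_ideal (A : pset K n) : is_ideal (ideal_gen A).
Proof.
split.
- by exists [::]; rewrite big_nil.
- move=> f g [s [sA ->]] [t [tA ->]]; exists (s ++ t); rewrite big_cat.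
  by split=> // p; rewrite mem_cat => /orP[/sA|/tA].
- move=> r f [s [sA ->]]; exists [seq (r * p.1, p.2) | p <- s]; split.
    by move=> p /mapP[q qs ->] /=; apply: sA.
  by rewrite big_map mulr_sumr; apply: eq_bigr => p _; rewrite mulrA.
Qed.

Lemma ideal_gen_in (A : pset K n) f : A f -> ideal_gen A f.
Proof.
move=> Af; exists [:: (1, f)]; rewrite big_seq1 mul1r.
by split=> // p; rewrite inE => /eqP ->.
Qed.

Variable I : pset K n.
Hypothesis I_ideal : is_ideal I.

Lemma ideal0 : I 0.
Proof. by case: I_ideal. Qed.

Lemma idealD f g : I f -> I g -> I (f + g).
Proof. by case: I_ideal => _ addI _; apply: addI. Qed.

Lemma idealM r f : I f -> I (r * f).
Proof. by case: I_ideal => _ _ mulI; apply: mulI. Qed.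

Lemma idealB f g : I f -> I g -> I (f - g).
Proof. by move=> If Ig; rewrite -mulN1r; apply/idealD/idealM. Qed.

Lemma idealZX c u h : I h -> I (c *: (h * 'X_[u])).
Proof.
move=> Ih; have -> : c *: (h * 'X_[u]) = (c%:MP * 'X_[u]) * h.
  by rewrite -mul_mpolyC; ring.
exact: idealM.
Qed.

End Ideals.

Section MonomialOrder.
Variables (K : fieldType) (n : nat) (le : rel 'X_{1..n}).
Hypothesis Hle : monomial_order le.
Local Notation mono := 'X_{1..n}.
Local Notation poly := {mpoly K[n]}.

Definition mlt (a b : mono) : bool := le a b && (a != b).

Lemma mle_refl m : le m m.
Proof. by case: Hle => -[]. Qed.

Lemma mle_anti a b : le a b -> le b a -> a = b.
Proof. by case: Hle => -[_ anti _ _] _ ab ba; apply: anti; apply/andP. Qed.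

Lemma mle_trans a b c : le a b -> le b c -> le a c.
Proof. by case: Hle => -[_ _ tr _] _; apply: tr. Qed.

Lemma mle_total a b : le a b || le b a.
Proof. by case: Hle => -[_ _ _ tot] _. Qed.

Lemma mle_addr a b m : le a b -> le (a + m)%MM (b + m)%MM.
Proof. by case: Hle => _ [compat _]; apply: compat. Qed.

Lemma mle_addl a b m : le a b -> le (m + a)%MM (m + b)%MM.
Proof. by rewrite ![(m + _)%MM]addmC; apply: mle_addr. Qed.

Lemma mlt_wf : well_founded mlt.
Proof. by case: Hle => _ []. Qed.

(* The unit monomial is the least one: if m < 0 then m + y < y for every y,
   an infinite descent from 0. *)
Lemma mle0 m : le 0%MM m.
Proof.
case/orP: (mle_total 0%MM m) => // m_le0.
have [->|m_neq0] := eqVneq m 0%MM; first exact: mle_refl.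
have descent y : mlt (m + y)%MM y.
  rewrite /mlt -{2 4}[y]add0m mle_addr //= eqm_add2r.
  exact: m_neq0.
suff no_acc x : ~ Acc mlt x by case: (no_acc 0%MM); apply: mlt_wf.
by elim=> z _ IH; apply: (IH _ (descent z)).
Qed.

Lemma mlt_le_trans a b c : mlt a b -> le b c -> mlt a c.
Proof.
case/andP=> ab a_neq_b bc; rewrite /mlt (mle_trans ab bc) /=.
by apply: contraNneq a_neq_b => ac; apply/eqP/mle_anti; rewrite // ac.
Qed.

Lemma mle_lt_trans a b c : le a b -> mlt b c -> mlt a c.
Proof.
move=> ab /andP[bc b_neq_c]; rewrite /mlt (mle_trans ab bc) /=.
by apply: contraNneq b_neq_c => ac; apply/eqP/mle_anti; rewrite // -ac.
Qed.

Lemma foldr_max_spec (s : seq mono) :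
  let r := foldr (fun m acc => if le acc m then m else acc) 0%MM s in
  (forall m, m \in s -> le m r) /\ (s != [::] -> r \in s).
Proof.
elim: s => [|x s [IH1 IH2]] //=.
set r := foldr _ _ s in IH1 IH2 *.
case: ifP => r_le_x; split.
- move=> m; rewrite inE => /orP[/eqP ->|ms]; first exact: mle_refl.
  exact: mle_trans (IH1 _ ms) r_le_x.
- by rewrite mem_head.
- move=> m; rewrite inE => /orP[/eqP ->|]; last exact: IH1.
  by case/orP: (mle_total r x); rewrite ?r_le_x.
- have [s0|s_neq0] := eqVneq s [::]; last by rewrite inE IH2 ?orbT.
  by move: r_le_x; rewrite /r s0 /= mle0.
Qed.

Lemma lmono_max (p : poly) m : m \in msupp p -> le m (lmono le p).
Proof. by case: (foldr_max_spec (msupp p)) => max _; apply: max. Qed.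

Lemma lmono_supp (p : poly) : p != 0 -> lmono le p \in msupp p.
Proof.
by move=> p_neq0; case: (foldr_max_spec (msupp p)) => _; apply; rewrite msupp_eq0.
Qed.

Definition supp_le (M : mono) (p : poly) : Prop :=
  forall m, m \in msupp p -> le m M.
Definition supp_lt (M : mono) (p : poly) : Prop :=
  forall m, m \in msupp p -> mlt m M.

Lemma supp_le_lmono p : supp_le (lmono le p) p.
Proof. by move=> m; apply: lmono_max. Qed.

Lemma supp_le_lt M M' p : supp_le M p -> mlt M M' -> supp_lt M' p.
Proof. by move=> bnd MM' m /bnd /mle_lt_trans; apply. Qed.

Lemma supp_lt_trans M M' p : supp_lt M p -> le M M' -> supp_lt M' p.
Proof. by move=> bnd MM' m /bnd /mlt_le_trans; apply. Qed.

Lemma supp_le0 M : supp_le M 0.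
Proof. by move=> m; rewrite msupp0. Qed.

Lemma supp_lt0 M : supp_lt M 0.
Proof. by move=> m; rewrite msupp0. Qed.

Lemma supp_leD M p q : supp_le M p -> supp_le M q -> supp_le M (p + q).
Proof. by move=> bp bq m /msuppD_le; rewrite mem_cat => /orP[/bp|/bq]. Qed.

Lemma supp_ltD M p q : supp_lt M p -> supp_lt M q -> supp_lt M (p + q).
Proof. by move=> bp bq m /msuppD_le; rewrite mem_cat => /orP[/bp|/bq]. Qed.

Lemma supp_leB M p q : supp_le M p -> supp_le M q -> supp_le M (p - q).
Proof. by move=> bp bq m /msuppB_le; rewrite mem_cat => /orP[/bp|/bq]. Qed.

Lemma supp_leZ M c p : supp_le M p -> supp_le M (c *: p).
Proof. by move=> bp m /msuppZ_le /bp. Qed.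

Lemma supp_leMX M u p : supp_le M p -> supp_le (u + M)%MM (p * 'X_[u]).
Proof.
move=> bp m; rewrite (perm_mem (msuppMX p u)) => /mapP[m' /bp m'M ->].
exact: mle_addl.
Qed.

Lemma supp_le_sum M (l : seq poly) :
  (forall g, g \in l -> supp_le M g) -> supp_le M (\sum_(g <- l) g).
Proof.
elim: l => [|g l IH] bl; first by rewrite big_nil; apply: supp_le0.
rewrite big_cons; apply: supp_leD; first by apply: bl; rewrite mem_head.
by apply: IH => x xl; apply: bl; rewrite inE xl orbT.
Qed.

Lemma supp_lt_sum M (l : seq poly) :
  (forall g, g \in l -> supp_lt M g) -> supp_lt M (\sum_(g <- l) g).
Proof.
elim: l => [|g l IH] bl; first by rewrite big_nil; apply: supp_lt0.
rewrite big_cons; apply: supp_ltD; first by apply: bl; rewrite mem_head.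
by apply: IH => x xl; apply: bl; rewrite inE xl orbT.
Qed.

Lemma supp_lt_coef0 M p : supp_le M p -> p@_M = 0 -> supp_lt M p.
Proof.
move=> bp pM0 m mp; rewrite /mlt bp //=.
by apply: contraTneq mp => ->; rewrite mcoeff_msupp pM0 eqxx.
Qed.

Lemma supp_lt_coef M p : supp_lt M p -> p@_M = 0.
Proof.
move=> bp; apply/eqP; rewrite mcoeff_eq0; apply/negP=> /bp.
by rewrite /mlt eqxx andbF.
Qed.

Lemma lmono_lt M p : supp_lt M p -> p != 0 -> mlt (lmono le p) M.
Proof. by move=> bp p_neq0; apply/bp/lmono_supp. Qed.

Lemma lmono_top M p : supp_le M p -> p@_M != 0 -> lmono le p = M.
Proof.
move=> bp pM_neq0.
have p_neq0 : p != 0 by apply: contraNneq pM_neq0 => ->; rewrite mcoeff0.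
by apply: mle_anti; [apply/bp/lmono_supp | apply: lmono_max; rewrite mcoeff_msupp].
Qed.

Definition has_lm_divisor (F : pset K n) (m : mono) : Prop :=
  exists h, [/\ F h, h != 0 & (lmono le h <= m)%MM].

(* Divisibility passes to multiples, so the property "every monomial of the
   support has an lm-divisor in F" passes from generators to their ideal. *)
Lemma lm_divisor_gen (A F : pset K n) :
  (forall p, A p -> forall m, m \in msupp p -> has_lm_divisor F m) ->
  forall q, ideal_gen A q -> forall m, m \in msupp q -> has_lm_divisor F m.
Proof.
move=> divA; apply: (@ideal_gen_ind _ _ A
  (fun q => forall m, m \in msupp q -> has_lm_divisor F m)) => //.
- by move=> m; rewrite msupp0.
- by move=> f g df dg m /msuppD_le; rewrite mem_cat => /orP[/df|/dg].
- move=> r f df m /msuppM_le /allpairsP[[m1 m2] [_ /df [h [Fh h_neq0 hm2]] ->]].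
  by exists h; split=> //; apply: lepm_trans hm2 (lem_addl _ _).
Qed.

Lemma lm_divisor_initial (I F : pset K n) : (forall h, I h -> F h) ->
  forall q, initial_ideal le I q ->
  forall m, m \in msupp q -> has_lm_divisor F m.
Proof.
move=> IF; apply: lm_divisor_gen => _ [h [Ih h_neq0 ->]] m.
rewrite msuppX inE => /eqP ->.
by exists h; split=> //; [apply: IF | apply: lepm_refl].
Qed.

Lemma G_nice_lm_divisor (A B : pset K n) ea eb :
  G_nice le A B -> A ea -> B eb -> ea + eb != 0 ->
  has_lm_divisor (fun h => A h \/ B h) (lmono le (ea + eb)).
Proof.
move=> AB_nice Aea Beb s_neq0.
have in_init : initial_ideal le (ideal_add A B) 'X_[lmono le (ea + eb)].
  apply: ideal_gen_in; exists (ea + eb); split=> //.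
  apply: idealD; first exact: ideal_gen_ideal.
    by apply: ideal_gen_in; left.
  by apply: ideal_gen_in; right.
have init_sum := iffLR (AB_nice _) in_init.
apply: (lm_divisor_gen _ init_sum); last by rewrite msuppX mem_head.
move=> p [initA|initB].
- by apply: (lm_divisor_initial _ initA) => h; left.
- by apply: (lm_divisor_initial _ initB) => h; right.
Qed.

Section PairReduction.
Variables A B : pset K n.
Hypotheses (A_ideal : is_ideal A) (B_ideal : is_ideal B).
Hypothesis AB_nice : G_nice le A B.

Definition pair_reducible (N : mono) : Prop :=
  forall ea eb, A ea -> B eb -> supp_le N (ea + eb) ->
  exists e ea' eb', [/\ A e \/ B e, supp_le N e, A ea' /\ supp_lt N ea',
                       B eb' /\ supp_lt N eb' & ea + eb = e + ea' + eb'].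

(* If reduction works below N, a sum lying strictly below N is a sum of
   elements of A and B lying strictly below N: reduce at its leading
   monomial and absorb the remaining term e into its own ideal. *)
Lemma split_below N : (forall N', mlt N' N -> pair_reducible N') ->
  forall xa xb, A xa -> B xb -> supp_lt N (xa + xb) ->
  exists ya yb,
    [/\ A ya /\ supp_lt N ya, B yb /\ supp_lt N yb & xa + xb = ya + yb].
Proof.
move=> IH xa xb Axa Bxb x_lt.
have [x0|x_neq0] := eqVneq (xa + xb) 0.
  exists 0, 0; rewrite x0 addr0; split=> //; split.
  - exact: ideal0 A_ideal.
  - exact: supp_lt0.
  - exact: ideal0 B_ideal.
  - exact: supp_lt0.
have top_lt := lmono_lt x_lt x_neq0; have /andP[top_le _] := top_lt.
have [e [ea [eb [Ae_or_Be e_le [Aea ea_lt] [Beb eb_lt] ->]]]] :=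
  IH _ top_lt xa xb Axa Bxb (@supp_le_lmono (xa + xb)).
have e_lt := supp_le_lt e_le top_lt.
have ea_ltN := supp_lt_trans ea_lt top_le.
have eb_ltN := supp_lt_trans eb_lt top_le.
case: Ae_or_Be => [Ae|Be].
- exists (e + ea), eb; split=> //.
  by split; [apply: idealD | apply: supp_ltD].
- exists ea, (e + eb); split=> //; last by ring.
  by split; [apply: idealD | apply: supp_ltD].
Qed.

(* The top term of ea + eb is cancelled by a scalar multiple of a monomial
   multiple t of an element of A or B, which G-niceness provides. *)
Lemma cancel_top N ea eb : A ea -> B eb -> supp_le N (ea + eb) ->
  (ea + eb)@_N != 0 ->
  exists t, [/\ A t \/ B t, supp_le N t & t@_N = (ea + eb)@_N].
Proof.
move=> Aea Beb s_le sN_neq0.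
have s_neq0 : ea + eb != 0 by apply: contraNneq sN_neq0 => ->; rewrite mcoeff0.
have [h [Ah_or_Bh h_neq0]] := G_nice_lm_divisor AB_nice Aea Beb s_neq0.
rewrite (lmono_top s_le sN_neq0) => h_div.
set u := (N - lmono le h)%MM.
have uN : (u + lmono le h)%MM = N by rewrite submK.
have hc_neq0 : h@_(lmono le h) != 0 by rewrite -mcoeff_msupp lmono_supp.
set c := (ea + eb)@_N / h@_(lmono le h).
exists (c *: (h * 'X_[u])); split.
- by case: Ah_or_Bh => [Ah|Bh]; [left|right]; apply: idealZX.
- by apply: supp_leZ; rewrite -uN; apply/supp_leMX/supp_le_lmono.
- by rewrite mcoeffZ -{1}uN mcoeffMX /c divfK.
Qed.

(* Cancel the top term, then split the remainder below N. *)
Lemma pair_reduce N : pair_reducible N.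
Proof.
elim/(well_founded_induction mlt_wf): N => N IH ea eb Aea Beb s_le.
have [sN0|sN_neq0] := eqVneq (ea + eb)@_N 0.
  have [ya [yb [Aya Byb ->]]] := split_below IH Aea Beb (supp_lt_coef0 s_le sN0).
  exists 0, ya, yb; rewrite add0r; split=> //; last exact: supp_le0.
  by left; apply: ideal0 A_ideal.
have [t [At_or_Bt t_le tN]] := cancel_top Aea Beb s_le sN_neq0.
have rest_lt : supp_lt N (ea + eb - t).
  by apply: supp_lt_coef0; [apply: supp_leB | rewrite mcoeffB tN subrr].
case: At_or_Bt => [At|Bt].
- have rest_lt' : supp_lt N (ea - t + eb) by rewrite addrAC.
  have [ya [yb [Aya Byb rest]]] :=
    split_below IH (idealB A_ideal Aea At) Beb rest_lt'.
  exists t, ya, yb; split=> //; first by left.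
  by rewrite -addrA -rest; ring.
- have rest_lt' : supp_lt N (ea + (eb - t)) by rewrite addrA.
  have [ya [yb [Aya Byb rest]]] :=
    split_below IH Aea (idealB B_ideal Beb Bt) rest_lt'.
  exists t, ya, yb; split=> //; first by right.
  by rewrite -addrA -rest; ring.
Qed.

End PairReduction.

Definition list_bound (l : seq poly) : mono :=
  foldr (fun m acc => if le acc m then m else acc) 0%MM [seq lmono le g | g <- l].

Lemma supp_le_list_bound l g : g \in l -> supp_le (list_bound l) g.
Proof.
move=> gl m /lmono_max /mle_trans; apply.
by case: (foldr_max_spec [seq lmono le g | g <- l]) => max _; apply/max/map_f.
Qed.

(* If every term of l lies below M and one of them is nonzero, the bound of l
   lies below M; the zero polynomial has leading monomial 0, the least one. *)
Lemma list_bound_lt M l g : (forall x, x \in l -> supp_lt M x) ->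
  g \in l -> g != 0 -> mlt (list_bound l) M.
Proof.
move=> l_lt gl g_neq0.
have /mapP[x xl ->] : list_bound l \in [seq lmono le g | g <- l].
  case: (foldr_max_spec [seq lmono le g | g <- l]) => _; apply.
  by move: gl; case: (l).
have [->|x_neq0] := eqVneq x 0; last exact: lmono_lt (l_lt x xl) x_neq0.
have -> : lmono le (0 : poly) = 0%MM by rewrite /lmono msupp0.
exact: mle_lt_trans (mle0 _) (lmono_lt (l_lt g gl) g_neq0).
Qed.

Section Family.
Variables (L : Type) (E : L -> pset K n).
Hypothesis E_ideal : forall i, is_ideal (E i).
Hypothesis E_nice : forall i j, G_nice le (E i) (E j).

Definition in_family (g : poly) : Prop := exists i, E i g.

(* Merging the terms of a list two at a time with [pair_reduce] leaves at
   most one term e reaching the bound M, all others lying strictly below. *)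
Lemma list_reduce M (l : seq poly) :
  (forall g, g \in l -> in_family g /\ supp_le M g) ->
  exists e l', [/\ e = 0 \/ in_family e, supp_le M e,
    (forall g, g \in l' -> in_family g /\ supp_lt M g) &
    \sum_(g <- l) g = e + \sum_(g <- l') g].
Proof.
elim: l => [|g l IH] l_le.
  by exists 0, [::]; rewrite !big_nil addr0; split=> //; [left | apply: supp_le0].
have [[i Eig] g_le] := l_le g (mem_head _ _).
have [x xl|e [l' [e_fam e_le l'_lt sum_l]]] := IH.
  by apply: l_le; rewrite inE xl orbT.
rewrite big_cons sum_l; case: e_fam => [e0|[j Eje]].
  by exists g, l'; rewrite e0 add0r; split=> //; right; exists i.
have [e2 [ea [eb [Ee2 e2_le [Eiea ea_lt] [Ejeb eb_lt] sum_pair]]]] :=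
  pair_reduce (E_ideal i) (E_ideal j) (E_nice i j) Eig Eje (supp_leD g_le e_le).
exists e2, [:: ea, eb & l']; split=> //.
- by right; case: Ee2 => ?; [exists i | exists j].
- move=> x; rewrite !inE => /orP[/eqP ->|/orP[/eqP ->|/l'_lt //]].
    by split=> //; exists i.
  by split=> //; exists j.
- by rewrite !big_cons addrA sum_pair; ring.
Qed.

Lemma sum_lm_divisor M (l : seq poly) :
  (forall g, g \in l -> in_family g /\ supp_le M g) ->
  \sum_(g <- l) g != 0 -> has_lm_divisor in_family (lmono le (\sum_(g <- l) g)).
Proof.
elim/(well_founded_induction mlt_wf): M l => M IH l l_le s_neq0.
have s_le : supp_le M (\sum_(g <- l) g) by apply: supp_le_sum => g /l_le [].
have [sM0|sM_neq0] := eqVneq (\sum_(g <- l) g)@_M 0; last first.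
  (* a term reaching M has the same leading monomial M as the sum *)
  have [g gl gM_neq0] : exists2 g, g \in l & g@_M != 0.
    by apply: nonzero_summand; rewrite -raddf_sum.
  have [[i Eig] g_le] := l_le g gl.
  exists g; split; first by exists i.
    by apply: contraNneq gM_neq0 => ->; rewrite mcoeff0.
  by rewrite (lmono_top g_le gM_neq0) (lmono_top s_le sM_neq0) lepm_refl.
(* otherwise all terms are pushed strictly below M, hence below some M' < M *)
have [e [l' [e_fam e_le l'_lt sum_l]]] := list_reduce l_le.
have l'_sum_lt : supp_lt M (\sum_(g <- l') g).
  by apply: supp_lt_sum => g /l'_lt [].
have e_lt : supp_lt M e.
  apply: supp_lt_coef0 => //.
  by move: sM0; rewrite sum_l mcoeffD (supp_lt_coef l'_sum_lt) addr0.
have [l2 l2_lt sum_l2] : exists2 l2,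
    (forall g, g \in l2 -> in_family g /\ supp_lt M g) &
    e + \sum_(g <- l') g = \sum_(g <- l2) g.
  case: e_fam => [e0|Ee]; first by exists l'; rewrite ?e0 ?add0r.
  exists (e :: l'); last by rewrite big_cons.
  by move=> g; rewrite inE => /orP[/eqP ->|/l'_lt //].
rewrite sum_l sum_l2 in s_neq0 *.
have [g gl g_neq0] := nonzero_summand s_neq0.
have l2_lt' x (xl : x \in l2) : supp_lt M x := (l2_lt x xl).2.
apply: (IH _ (list_bound_lt l2_lt' gl g_neq0)) => // x xl.
by split; [apply: (l2_lt x xl).1 | apply: supp_le_list_bound].
Qed.

Lemma bigsum_lm_divisor g : ideal_bigsum E g -> g != 0 ->
  has_lm_divisor in_family (lmono le g).
Proof.
case=> s [s_fam g_sum] g_neq0.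
pose l := [seq p.1 * p.2 | p <- s].
have g_l : g = \sum_(x <- l) x by rewrite g_sum big_map.
rewrite g_l in g_neq0 *; apply: (@sum_lm_divisor (list_bound l)) => // x xl.
split; last exact: supp_le_list_bound.
have /mapP[p ps ->] := xl; have [i Eip] := s_fam p ps.
by exists i; apply: idealM.
Qed.

End Family.

(* If in(h) divides in(g), then S(f,g) = w * (S(f,h) + c * h) - c' * g for a
   monomial w and scalar multiples c, c' of monomials, so S(f,g) lies in
   every ideal containing g, h and S(f,h). *)
Lemma spoly_lm_divisor (I : pset K n) f g h :
  is_ideal I -> I g -> I h -> I (spoly le f h) ->
  (lmono le h <= lmono le g)%MM -> I (spoly le f g).
Proof.
move=> I_ideal Ig Ih Ispfh hg.
rewrite /spoly; set a := lmono le f; set b := lmono le h; set c := lmono le g.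
have ab_ac : (mlcm a b <= mlcm a c)%MM.
  by rewrite lem_mlcm lem_mlcml (lepm_trans hg (lem_mlcmr _ _)).
have -> : (lcoef le f)^-1 *: 'X_[(mlcm a c - a)%MM] * f =
    'X_[(mlcm a c - mlcm a b)%MM] *
    ((lcoef le f)^-1 *: 'X_[(mlcm a b - a)%MM] * f).
  by rewrite mulrA -scalerAr -mpolyXD (addmBA _ (lem_mlcml _ _)) (submK ab_ac).
have top_f : I ((lcoef le f)^-1 *: 'X_[(mlcm a b - a)%MM] * f).
  have -> : (lcoef le f)^-1 *: 'X_[(mlcm a b - a)%MM] * f =
      spoly le f h + (lcoef le h)^-1 *: 'X_[(mlcm a b - b)%MM] * h.
    by rewrite /spoly -/a -/b subrK.
  by apply: (idealD I_ideal) => //; apply: (idealM I_ideal).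
by apply: (idealB I_ideal); apply: (idealM I_ideal).
Qed.

End MonomialOrder.

Theorem mainTheorem16 (K : fieldType) (n : nat) (le : rel 'X_{1..n})
  (Hle : monomial_order le)
  (J : pset K n) (HJ : is_ideal J) (G : seq {mpoly K[n]})
  (HG : groebner_basis le J G)
  (L : Type) (E : L -> pset K n)
  (HE : forall i, is_ideal (E i))
  (HS : forall i, S_nice le G (E i)) :
  S_nice le G (ideal_bigcap E) /\
  ((forall i j, G_nice le (E i) (E j)) -> S_nice le G (ideal_bigsum E)).
Proof.
split.
- (* (a): S(f,g) lies in each E_i because g does *)
  by move=> f g fG Eg g_neq0 i; apply: HS.
- (* (b): reduce to an lm-divisor h of g in some E_i, where S(f,h) is known *)
  move=> HN f g fG sum_g g_neq0.
  have [h [[i Eih] h_neq0 hg]] := bigsum_lm_divisor Hle HE HN sum_g g_neq0.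
  have in_sum p : E i p -> ideal_bigsum E p.
    by move=> Eip; apply: ideal_gen_in; exists i.
  apply: (spoly_lm_divisor (ideal_gen_ideal _) sum_g _ _ hg).
  + exact: in_sum.
  + by apply/in_sum/HS.
Qed.
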